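(* Let $0<q<1$, $N\in\{\tfrac12,1,\tfrac32,2,\dots\}$, $n\in\{0,1,\dots,\lfloor N\rfloor\}$, and $\alpha\in\mathbb{C}$ with $\pm q\alpha, q^2\alpha^2\notin\{q^{-j}:j\in\mathbb{Z}_{\ge0}\}$. Then for all $x\in\mathbb{C}$: $${}_4\phi_3\!\left(\begin{matrix}q^{-2n-1},\alpha^2q^{2n+2},q^{-x-N-\frac12},-q^{x-N-\frac12}\\ q\alpha,-q\alpha,q^{-2N-1}\end{matrix};q,q\right)=\frac{q^{-x-N-\frac12}-q^{x-N-\frac12}}{1-q^{-2N-1}}\;{}_4\phi_3\!\left(\begin{matrix}q^{-2n},\alpha^2q^{2n+3},q^{-2x-2N-1},q^{2x-2N-1}\\ q^2\alpha^2,q^{-2N+1},q^{-2N}\end{matrix};q^2,q^2\right).$$ (Equivalently, $R_{2n+1}(q^{-x-N-\frac12}-q^{x-N-\frac12};\alpha,\alpha,q^{-2N-2},-1\,|\,q)=\frac{q^{-x-N-\frac12}-q^{x-N-\frac12}}{1-q^{-2N-1}}R_n(q^{-2x-2N-1}+q^{2x-2N-1};\alpha^2,q,q^{-2N-2},q^{-2N-2}\,|\,q^2)$.)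
   Context: $(x;q)_k=\prod_{j=0}^{k-1}(1-xq^j)$. ${}_4\phi_3\!\left(\begin{matrix}a_1,\dots,a_4\\ b_1,b_2,b_3\end{matrix};q,z\right)=\sum_{k\ge0}\frac{(a_1,\dots,a_4;q)_k}{(b_1,b_2,b_3,q;q)_k}z^k$, terminating here because of the numerator $q^{-2n-1}$ (base $q$) resp. $q^{-2n}$ (base $q^2$). $q$-Racah polynomials: $R_n(q^{-y}+\gamma\delta q^{y+1};\alpha,\beta,\gamma,\delta\,|\,q)={}_4\phi_3(q^{-n},\alpha\beta q^{n+1},q^{-y},\gamma\delta q^{y+1};\alpha q,\beta\delta q,\gamma q;q,q)$. *)

From HB Require Import structures.
From mathcomp Require Import all_boot all_order all_algebra all_field.
Set Implicit Arguments. Unset Strict Implicit. Unset Printing Implicit Defensive.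
Import Order.TTheory GRing.Theory Num.Theory.
Local Open Scope ring_scope.

Definition qpoch (C : numClosedFieldType) (x q : C) (k : nat) : C :=
  \prod_(j < k) (1 - x * q ^+ j).

(* Terminating basic hypergeometric series 4phi3 with base q and argument z,
   where the first numerator parameter is a1 = q^{-K}; the series then
   terminates and equals the finite sum over 0 <= k <= K. *)
Definition phi43 (C : numClosedFieldType) (a1 a2 a3 a4 b1 b2 b3 q z : C)
  (K : nat) : C :=
  \sum_(k < K.+1)
    (qpoch a1 q k * qpoch a2 q k * qpoch a3 q k * qpoch a4 q k)
    / (qpoch b1 q k * qpoch b2 q k * qpoch b3 q k * qpoch q q k) * z ^+ k.

From HB Require Import structures.
From mathcomp Require Import all_boot all_order all_algebra all_field.
From mathcomp Require Import ring zify.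
Import Order.TTheory GRing.Theory Num.Theory.
Local Open Scope ring_scope.

(* Put t = q^(-N-1/2) and z = q^x.  Both sides are polynomials of degree at most 2n+1
   in the lattice variable z^-1 - z: the left side through the basis (t/z, -tz; q)_k, the
   right side as z^-1 - z times a polynomial in (z^-1 - z)^2, through the basis
   (t^2 z^-2, t^2 z^2; q^2)_j.  Both are eigenfunctions, with the same eigenvalue, of one
   second-order q-difference operator: each basis function is mapped to a combination of
   itself and its predecessor, and the coefficients of the two 4phi3 series make these
   combinations telescope.  On the nodes z = t q^m the eigenvalue equation is a forward
   recurrence, and both sides equal 1 at z = t, so they agree at the 2n+2 nodes
   m = 0, ..., 2n+1.  These have distinct lattice values, so the polynomials coincide. *)

Ltac field_nz := first [ring | field; repeat (apply/andP; split); rewrite ?expf_neq0 //].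

Section QPochhammer.
Context {C : numClosedFieldType}.

Lemma qpoch0 (x p : C) : qpoch x p 0 = 1.
Proof. by rewrite /qpoch big_ord0. Qed.

Lemma qpochSl (x y p : C) k : x * p = y -> qpoch x p k.+1 = (1 - x) * qpoch y p k.
Proof.
move=> <-; rewrite /qpoch big_ord_recl expr0 mulr1; congr (_ * _).
by apply: eq_bigr => i _; rewrite /bump /= exprS mulrA.
Qed.

Lemma qpochSr (x p : C) k : qpoch x p k.+1 = qpoch x p k * (1 - x * p ^+ k).
Proof. by rewrite /qpoch big_ord_recr. Qed.

End QPochhammer.

Section Telescope.
Context {R : comPzRingType}.

Lemma telescope_eigen_sum (c mu rho phi : nat -> R) K :
  rho 0%N = 0 ->
  (forall k, (k < K)%N -> c k * (mu k - mu K) + c k.+1 * rho k.+1 = 0) ->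
  \sum_(k < K.+1) c k * (mu k * phi k + rho k * phi k.-1) = mu K * \sum_(k < K.+1) c k * phi k.
Proof.
move=> rho0 c_rec; apply/eqP; rewrite -subr_eq0 mulr_sumr -sumrB.
rewrite (eq_bigr (fun k : 'I_K.+1 => c k * (mu k - mu K) * phi k + c k * rho k * phi k.-1));
  last by move=> k _; ring.
rewrite big_split /= big_ord_recr /= subrr mulr0 mul0r addr0.
rewrite big_ord_recl /= rho0 mulr0 mul0r add0r -big_split /=.
apply/eqP/big1 => k _; rewrite /bump /= add1n /= -mulrDl.
by rewrite (c_rec _ (ltn_ord k)) mul0r.
Qed.

End Telescope.

Section QRacahOperator.
Context {C : numClosedFieldType}.
Variables (q t a : C).
Hypotheses (q_neq0 : q != 0) (t_neq0 : t != 0).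

(* Up to the factor [opP], which clears denominators, [qdiff] is the difference operator
   of the q-Racah polynomials in the variable z = q^x. *)
Definition opB z :=
  (1 - a ^+ 2 * q ^+ 2 * z ^+ 2 / t ^+ 2) * (1 - t ^+ 2 * z ^+ 2) * (1 + z ^+ 2 / q).
Definition opD z :=
  q * (1 - z ^+ 2 / t ^+ 2) * (a ^+ 2 - t ^+ 2 * z ^+ 2 / q ^+ 2) * (1 + q * z ^+ 2).
Definition opP z := (1 + z ^+ 2 / q) * (1 + z ^+ 2) * (1 + q * z ^+ 2).
Definition qdiff (f : C -> C) z := opB z * (f (q * z) - f z) + opD z * (f (z / q) - f z).

Lemma qdiff_sum (c : nat -> C) (f : nat -> C -> C) K z :
  qdiff (fun z => \sum_(k < K) c k * f k z) z = \sum_(k < K) c k * qdiff (f k) z.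
Proof.
elim: K => [|K IH]; first by rewrite /qdiff !big_ord0 !subrr !mulr0 addr0.
move: IH; rewrite /qdiff !big_ord_recr /= => <-; ring.
Qed.

Lemma qdiffZ (c : C) (f : C -> C) z : qdiff (fun z => c * f z) z = c * qdiff f z.
Proof. by rewrite /qdiff; ring. Qed.

Definition basisL k z := qpoch (t / z) q k * qpoch (- (t * z)) q k.
Definition eigL k := (q ^+ k)^-1 * (1 - q ^+ k) * (1 - a ^+ 2 * q ^+ k * q).
Definition lowerL k :=
  - (q ^+ k)^-1 * (1 - a ^+ 2 * (q ^+ k) ^+ 2) * (1 - t ^+ 2 * q ^+ k / q) * (1 - q ^+ k).

Lemma qdiff_basisL k z : z != 0 ->
  qdiff (basisL k) z = opP z * (eigL k * basisL k z + lowerL k * basisL k.-1 z).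
Proof.
move=> z_neq0; have qz_neq0 : q * z != 0 by rewrite mulf_neq0.
case: k => [|[|j]].
- by rewrite /qdiff /basisL /eigL /lowerL !qpoch0 !expr0 !subrr; ring.
- rewrite /qdiff /basisL /eigL /lowerL /= !(qpochSl _ _ _ _ (erefl _)) !qpoch0 ?expr1 ?expr0.
  by rewrite /opB /opD /opP; field_nz.
set A := qpoch (t * q / z) q j; set B := qpoch (- (t * q * z)) q j.
have E0 : basisL j.+2 z =
    (1 - t / z) * A * (1 - t * q / z * q ^+ j) * ((1 + t * z) * B * (1 + t * q * z * q ^+ j)).
  rewrite /basisL (qpochSl (t / z) (t * q / z) q j.+1); last by field_nz.
  rewrite (qpochSr (t * q / z) q j).
  rewrite (qpochSl (- (t * z)) (- (t * q * z)) q j.+1); last by ring.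
  rewrite (qpochSr (- (t * q * z)) q j).
  rewrite /A /B; ring.
have Eup : basisL j.+2 (q * z) =
    (1 - t / (q * z)) * (1 - t / z) * A * (B * (1 + t * q * z * q ^+ j) * (1 + t * q * z * q ^+ j.+1)).
  rewrite /basisL (qpochSl (t / (q * z)) (t / z) q j.+1); last by field_nz.
  rewrite (qpochSl (t / z) (t * q / z) q j); last by field_nz.
  rewrite (qpochSr (- (t * (q * z))) q j.+1) (qpochSr (- (t * (q * z))) q j).
  rewrite /A /B (_ : t * (q * z) = t * q * z); last by ring.
  rewrite exprS; ring.
have Edown : basisL j.+2 (z / q) =
    A * (1 - t * q / z * q ^+ j) * (1 - t * q / z * q ^+ j.+1) * ((1 + t * z / q) * (1 + t * z) * B).
  rewrite /basisL (qpochSr (t / (z / q)) q j.+1) (qpochSr (t / (z / q)) q j).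
  rewrite (qpochSl (- (t * (z / q))) (- (t * z)) q j.+1); last by field_nz.
  rewrite (qpochSl (- (t * z)) (- (t * q * z)) q j); last by ring.
  rewrite /A /B (_ : t / (z / q) = t * q / z); last by field_nz.
  rewrite exprS; ring.
have Elow : basisL j.+1 z = (1 - t / z) * A * ((1 + t * z) * B).
  rewrite /basisL (qpochSl (t / z) (t * q / z) q j); last by field_nz.
  rewrite (qpochSl (- (t * z)) (- (t * q * z)) q j); last by ring.
  rewrite /A /B; ring.
rewrite /qdiff E0 Eup Edown /= Elow /opB /opD /opP /eigL /lowerL !exprS.
by field_nz.
Qed.

Definition qlattice (z : C) := z^-1 - z.
Definition basisR j z :=
  qlattice z * (qpoch (t ^+ 2 / z ^+ 2) (q ^+ 2) j * qpoch (t ^+ 2 * z ^+ 2) (q ^+ 2) j).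
Definition eigR j :=
  (q * (q ^+ 2) ^+ j)^-1 * (1 - q * (q ^+ 2) ^+ j) * (1 - a ^+ 2 * q ^+ 2 * (q ^+ 2) ^+ j).
Definition lowerR j :=
  - (q * (q ^+ 2) ^+ j)^-1 * (1 - a ^+ 2 * (q ^+ 2) ^+ j) * (1 - t ^+ 2 * (q ^+ 2) ^+ j)
    * (1 - t ^+ 2 * (q ^+ 2) ^+ j / q) * (1 - (q ^+ 2) ^+ j).

Lemma qdiff_basisR k z : z != 0 ->
  qdiff (basisR k) z = opP z * (eigR k * basisR k z + lowerR k * basisR k.-1 z).
Proof.
move=> z_neq0; have qz_neq0 : q * z != 0 by rewrite mulf_neq0.
case: k => [|[|j]].
- by rewrite /qdiff /basisR /eigR /lowerR /qlattice !qpoch0 !expr0 /opB /opD /opP; field_nz.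
- rewrite /qdiff /basisR /eigR /lowerR /qlattice /= !(qpochSl _ _ _ _ (erefl _)) !qpoch0 ?expr1 ?expr0.
  by rewrite /opB /opD /opP; field_nz.
set p := q ^+ 2; set x := t ^+ 2 / z ^+ 2; set y := t ^+ 2 * z ^+ 2.
set A := qpoch (x * p) p j; set B := qpoch (y * p) p j.
have E0 : basisR j.+2 z =
    qlattice z * ((1 - x) * A * (1 - x * p * p ^+ j) * ((1 - y) * B * (1 - y * p * p ^+ j))).
  rewrite /basisR -/p -/x -/y (qpochSl x (x * p) p j.+1) // (qpochSr (x * p) p j).
  rewrite (qpochSl y (y * p) p j.+1) // (qpochSr (y * p) p j) /A /B; ring.
have Eup : basisR j.+2 (q * z) = qlattice (q * z) *
    ((1 - x / p) * (1 - x) * A * (B * (1 - y * p * p ^+ j) * (1 - y * p * p ^+ j.+1))).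
  rewrite /basisR -/p (qpochSl (t ^+ 2 / (q * z) ^+ 2) x p j.+1); last by rewrite /x /p; field_nz.
  rewrite (qpochSl x (x * p) p j) //.
  rewrite (_ : t ^+ 2 * (q * z) ^+ 2 = y * p); last by rewrite /y /p; ring.
  rewrite (qpochSr (y * p) p j.+1) (qpochSr (y * p) p j).
  rewrite /A /B (_ : t ^+ 2 / (q * z) ^+ 2 = x / p); last by rewrite /x /p; field_nz.
  rewrite exprS; ring.
have Edown : basisR j.+2 (z / q) = qlattice (z / q) *
    (A * (1 - x * p * p ^+ j) * (1 - x * p * p ^+ j.+1) * ((1 - y / p) * (1 - y) * B)).
  rewrite /basisR -/p (_ : t ^+ 2 / (z / q) ^+ 2 = x * p); last by rewrite /x /p; field_nz.
  rewrite (qpochSr (x * p) p j.+1) (qpochSr (x * p) p j).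
  rewrite (qpochSl (t ^+ 2 * (z / q) ^+ 2) y p j.+1); last by rewrite /y /p; field_nz.
  rewrite (qpochSl y (y * p) p j) //.
  rewrite /A /B (_ : t ^+ 2 * (z / q) ^+ 2 = y / p); last by rewrite /y /p; field_nz.
  rewrite exprS; ring.
have Elow : basisR j.+1 z = qlattice z * ((1 - x) * A * ((1 - y) * B)).
  by rewrite /basisR -/p -/x -/y (qpochSl x (x * p) p j) // (qpochSl y (y * p) p j).
rewrite /qdiff E0 Eup Edown /= Elow /opB /opD /opP /eigR /lowerR -/p !(exprS p).
by rewrite /p /x /y /qlattice; field_nz.
Qed.

Definition coefL K k := qpoch (q ^- K) q k * qpoch (a ^+ 2 * q ^+ K.+1) q k /
  (qpoch (q * a) q k * qpoch (- (q * a)) q k * qpoch (t ^+ 2) q k * qpoch q q k) * q ^+ k.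
Definition sumL K z := \sum_(k < K.+1) coefL K k * basisL k z.

Lemma phi43_sumL K z :
  phi43 (q ^- K) (a ^+ 2 * q ^+ K.+1) (t / z) (- (t * z)) (q * a) (- (q * a)) (t ^+ 2) q q K
  = sumL K z.
Proof. by apply: eq_bigr => k _; rewrite /coefL /basisL; ring. Qed.

Lemma coefL_recurrence K k :
  1 - q * a * q ^+ k != 0 -> 1 - - (q * a) * q ^+ k != 0 ->
  1 - t ^+ 2 * q ^+ k != 0 -> 1 - q * q ^+ k != 0 ->
  coefL K k * (eigL k - eigL K) + coefL K k.+1 * lowerL k.+1 = 0.
Proof.
move=> h1 h2 h3 h4.
have -> : coefL K k.+1 = coefL K k * ((1 - q ^- K * q ^+ k) * (1 - a ^+ 2 * q ^+ K.+1 * q ^+ k) /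
   ((1 - q * a * q ^+ k) * (1 - - (q * a) * q ^+ k) * (1 - t ^+ 2 * q ^+ k) * (1 - q * q ^+ k)) * q).
  by rewrite /coefL !qpochSr !invfM (exprS q k); ring.
rewrite /eigL /lowerL; move: h1 h2 h3 h4.
rewrite !(exprS q k) !(exprS q K); set Q := q ^+ k; set R := q ^+ K => h1 h2 h3 h4.
by field_nz.
Qed.

Lemma qdiff_sumL K z : z != 0 ->
  (forall k, (k < K)%N -> [&& 1 - q * a * q ^+ k != 0, 1 - - (q * a) * q ^+ k != 0,
      1 - t ^+ 2 * q ^+ k != 0 & 1 - q * q ^+ k != 0]) ->
  qdiff (sumL K) z = opP z * (eigL K * sumL K z).
Proof.
move=> z_neq0 denoms; rewrite /sumL qdiff_sum.
under eq_bigr do rewrite qdiff_basisL //.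
rewrite (eq_bigr (fun k : 'I_K.+1 =>
  opP z * (coefL K k * (eigL k * basisL k z + lowerL k * basisL k.-1 z)))); last by move=> k _; ring.
rewrite -mulr_sumr (telescope_eigen_sum (coefL K) eigL lowerL (fun k => basisL k z)) //.
  by rewrite /lowerL expr0 subrr mulr0.
by move=> k /denoms /and4P[*]; apply: coefL_recurrence.
Qed.

Definition coefR n j :=
  qpoch (q ^- (2 * n)) (q ^+ 2) j * qpoch (a ^+ 2 * q ^+ (2 * n).+3) (q ^+ 2) j /
  (qpoch (q ^+ 2 * a ^+ 2) (q ^+ 2) j * qpoch (t ^+ 2 * q ^+ 2) (q ^+ 2) j
   * qpoch (t ^+ 2 * q) (q ^+ 2) j * qpoch (q ^+ 2) (q ^+ 2) j) * (q ^+ 2) ^+ j.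
Definition sumR n z := \sum_(j < n.+1) coefR n j * basisR j z.

Lemma phi43_sumR n z :
  (t / z - t * z) * phi43 (q ^- (2 * n)) (a ^+ 2 * q ^+ (2 * n).+3) (t ^+ 2 / z ^+ 2) (t ^+ 2 * z ^+ 2)
    (q ^+ 2 * a ^+ 2) (t ^+ 2 * q ^+ 2) (t ^+ 2 * q) (q ^+ 2) (q ^+ 2) n
  = t * sumR n z.
Proof.
rewrite /phi43 /sumR !mulr_sumr; apply: eq_bigr => j _.
by rewrite /coefR /basisR /qlattice; ring.
Qed.

Lemma coefR_recurrence n j :
  1 - q ^+ 2 * a ^+ 2 * (q ^+ 2) ^+ j != 0 -> 1 - t ^+ 2 * q ^+ 2 * (q ^+ 2) ^+ j != 0 ->
  1 - t ^+ 2 * q * (q ^+ 2) ^+ j != 0 -> 1 - q ^+ 2 * (q ^+ 2) ^+ j != 0 ->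
  coefR n j * (eigR j - eigR n) + coefR n j.+1 * lowerR j.+1 = 0.
Proof.
move=> h1 h2 h3 h4.
have -> : coefR n j.+1 = coefR n j * ((1 - q ^- (2 * n) * (q ^+ 2) ^+ j)
    * (1 - a ^+ 2 * q ^+ (2 * n).+3 * (q ^+ 2) ^+ j) /
   ((1 - q ^+ 2 * a ^+ 2 * (q ^+ 2) ^+ j) * (1 - t ^+ 2 * q ^+ 2 * (q ^+ 2) ^+ j)
    * (1 - t ^+ 2 * q * (q ^+ 2) ^+ j) * (1 - q ^+ 2 * (q ^+ 2) ^+ j)) * q ^+ 2).
  by rewrite /coefR !qpochSr !invfM (exprS (q ^+ 2) j); ring.
rewrite /eigR /lowerR; move: h1 h2 h3 h4.
rewrite !(exprS (q ^+ 2) j) (exprS q (2 * n).+2) (exprS q (2 * n).+1) (exprS q (2 * n)) exprM.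
set P := (q ^+ 2) ^+ j; set N := (q ^+ 2) ^+ n => h1 h2 h3 h4.
by field_nz; rewrite exprMn.
Qed.

Lemma qdiff_sumR n z : z != 0 ->
  (forall j, (j < n)%N -> [&& 1 - q ^+ 2 * a ^+ 2 * (q ^+ 2) ^+ j != 0,
      1 - t ^+ 2 * q ^+ 2 * (q ^+ 2) ^+ j != 0,
      1 - t ^+ 2 * q * (q ^+ 2) ^+ j != 0 & 1 - q ^+ 2 * (q ^+ 2) ^+ j != 0]) ->
  qdiff (sumR n) z = opP z * (eigR n * sumR n z).
Proof.
move=> z_neq0 denoms; rewrite /sumR qdiff_sum.
under eq_bigr do rewrite qdiff_basisR //.
rewrite (eq_bigr (fun k : 'I_n.+1 =>
  opP z * (coefR n k * (eigR k * basisR k z + lowerR k * basisR k.-1 z)))); last by move=> k _; ring.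
rewrite -mulr_sumr (telescope_eigen_sum (coefR n) eigR lowerR (fun k => basisR k z)) //.
  by rewrite /lowerR expr0 subrr mulr0.
by move=> k /denoms /and4P[*]; apply: coefR_recurrence.
Qed.

Definition node m := t * q ^+ m.

Lemma node_neq0 m : node m != 0.
Proof. by rewrite mulf_neq0 ?expf_neq0. Qed.

Lemma sumL_node0 K : sumL K (node 0) = 1.
Proof.
rewrite /sumL big_ord_recl big1 ?addr0 => [|k _].
  by rewrite /coefL /basisL !qpoch0; field_nz.
rewrite /basisL (qpochSl (t / node 0) (t / node 0 * q)) //.
by rewrite /node expr0 mulr1 divff // subrr !(mul0r, mulr0).
Qed.

Lemma sumR_node0 n : sumR n (node 0) = t^-1 - t.
Proof.
rewrite /sumR big_ord_recl big1 ?addr0 => [|k _].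
  by rewrite /coefR /basisR /qlattice /node !qpoch0 expr0 mulr1; field_nz.
rewrite /basisR (qpochSl (t ^+ 2 / node 0 ^+ 2) (t ^+ 2 / node 0 ^+ 2 * q ^+ 2)) //.
by rewrite /node expr0 mulr1 divff ?expf_neq0 // subrr !(mul0r, mulr0).
Qed.

(* [opD] vanishes at [node 0], so on the nodes the eigenvalue equation is a forward
   recurrence, solvable as long as [opB] does not vanish. *)
Lemma eigen_nodes_unique (F G : C -> C) mu N :
  (forall m, (m <= N)%N -> qdiff F (node m) = opP (node m) * (mu * F (node m))) ->
  (forall m, (m <= N)%N -> qdiff G (node m) = opP (node m) * (mu * G (node m))) ->
  (forall m, (m <= N)%N -> opB (node m) != 0) ->
  F (node 0) = G (node 0) ->
  forall m, (m <= N.+1)%N -> F (node m) = G (node m).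
Proof.
move=> eigF eigG opB_neq0 agree0.
have up m : q * node m = node m.+1 by rewrite /node exprS; ring.
have down m : node m.+1 / q = node m by rewrite /node exprS; field_nz.
have opD0 : opD (node 0) = 0 by rewrite /opD /node expr0 mulr1; field_nz.
have cancel_step (b x y c d r : C) : b != 0 -> b * (x - c) + d = r -> b * (y - c) + d = r -> x = y.
  by move=> b_neq0 <- /addIr /(mulfI b_neq0) /addIr.
have agree2 m : (m <= N)%N -> F (node m) = G (node m) /\ F (node m.+1) = G (node m.+1).
  elim: m => [|m IH] le_mN.
    split=> //; move: (eigF 0%N le_mN) (eigG 0%N le_mN).
    rewrite /qdiff up opD0 !mul0r !addr0 -agree0 => eF eG.
    by apply: (cancel_step _ _ _ _ 0 _ (opB_neq0 0%N le_mN)); rewrite addr0; [exact: eF | exact: eG].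
  have [eq_m eq_m1] := IH (ltnW le_mN); split=> //.
  move: (eigF m.+1 le_mN) (eigG m.+1 le_mN); rewrite /qdiff up down -eq_m -eq_m1 => eF eG.
  exact: (cancel_step _ _ _ _ _ _ (opB_neq0 _ le_mN) eF eG).
by case=> [_ | m /agree2[]].
Qed.

Definition basisL_poly k : {poly C} := \prod_(i < k) ((1 - node i ^+ 2)%:P - node i *: 'X).
Definition basisR_poly j : {poly C} :=
  \prod_(i < j) (((1 - t ^+ 2 * (q ^+ 2) ^+ i) ^+ 2)%:P - (t ^+ 2 * (q ^+ 2) ^+ i) *: 'X ^+ 2).

Lemma horner_basisL_poly k z : z != 0 -> (basisL_poly k).[qlattice z] = basisL k z.
Proof.
move=> z_neq0; rewrite horner_prod /basisL /qpoch -big_split /=; apply: eq_bigr => i _.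
by rewrite !hornerE /qlattice /node; field_nz.
Qed.

Lemma horner_basisR_poly j z : z != 0 -> qlattice z * (basisR_poly j).[qlattice z] = basisR j z.
Proof.
move=> z_neq0; rewrite horner_prod /basisR /qpoch -big_split /=; congr (_ * _); apply: eq_bigr => i _.
rewrite hornerD hornerN hornerC hornerZ hornerXn /qlattice.
by field_nz.
Qed.

Lemma size_basisL_poly k : (size (basisL_poly k) <= k.+1)%N.
Proof.
elim: k => [|k IH]; first by rewrite /basisL_poly big_ord0 size_poly1.
rewrite /basisL_poly big_ord_recr /= -/(basisL_poly k); apply: leq_trans (size_polyMleq _ _) _.
have size_factor : (size ((1 - node k ^+ 2)%:P - node k *: 'X)%R <= 2)%N.
  apply: leq_trans (size_polyD _ _) _; rewrite geq_max size_polyN.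
  by rewrite (leq_trans (size_polyC_leq1 _)) // (leq_trans (size_scale_leq _ _)) // size_polyX.
by have := leq_add IH size_factor; set s := (_ + _)%N; lia.
Qed.

Lemma size_basisR_poly j : (size (basisR_poly j) <= (2 * j).+1)%N.
Proof.
elim: j => [|j IH]; first by rewrite /basisR_poly big_ord0 size_poly1.
rewrite /basisR_poly big_ord_recr /= -/(basisR_poly j); apply: leq_trans (size_polyMleq _ _) _.
have size_factor : (size (((1 - t ^+ 2 * (q ^+ 2) ^+ j) ^+ 2)%:P
    - (t ^+ 2 * (q ^+ 2) ^+ j) *: 'X ^+ 2)%R <= 3)%N.
  apply: leq_trans (size_polyD _ _) _; rewrite geq_max size_polyN.
  by rewrite (leq_trans (size_polyC_leq1 _)) // (leq_trans (size_scale_leq _ _)) // size_polyXn.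
by have := leq_add IH size_factor; set s := (_ + _)%N; lia.
Qed.

Definition polyL K := \sum_(k < K.+1) coefL K k *: basisL_poly k.
Definition polyR n := (t / (1 - t ^+ 2)) *: ('X * \sum_(j < n.+1) coefR n j *: basisR_poly j).

Lemma horner_polyL K z : z != 0 -> (polyL K).[qlattice z] = sumL K z.
Proof.
move=> z_neq0; rewrite /polyL /sumL horner_sum; apply: eq_bigr => k _.
by rewrite hornerZ horner_basisL_poly.
Qed.

Lemma horner_polyR n z : z != 0 -> (polyR n).[qlattice z] = t / (1 - t ^+ 2) * sumR n z.
Proof.
move=> z_neq0; rewrite /polyR /sumR hornerZ hornerM hornerX horner_sum mulr_sumr; congr (_ * _).
by apply: eq_bigr => k _; rewrite hornerZ -horner_basisR_poly //; ring.
Qed.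

Lemma size_polyL K : (size (polyL K) <= K.+1)%N.
Proof.
apply: (big_ind (fun p : {poly C} => (size p <= K.+1)%N)).
- by rewrite size_poly0.
- by move=> p1 p2 h1 h2; apply: leq_trans (size_polyD _ _) _; rewrite geq_max h1 h2.
move=> k _; apply: leq_trans (size_scale_leq _ _) _; apply: leq_trans (size_basisL_poly k) _.
exact: ltn_ord.
Qed.

Lemma size_polyR n : (size (polyR n) <= (2 * n).+2)%N.
Proof.
apply: leq_trans (size_scale_leq _ _) _; apply: leq_trans (size_polyMleq _ _) _.
rewrite size_polyX add2n ltnS.
apply: (big_ind (fun p : {poly C} => (size p <= (2 * n).+1)%N)).
- by rewrite size_poly0.
- by move=> p1 p2 h1 h2; apply: leq_trans (size_polyD _ _) _; rewrite geq_max h1 h2.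
move=> k _; apply: leq_trans (size_scale_leq _ _) _; apply: leq_trans (size_basisR_poly k) _.
by have := ltn_ord k; lia.
Qed.

Lemma one_sub_mul_qpow_neq0 {x : C} {i : nat} : x != q ^- i -> 1 - x * q ^+ i != 0.
Proof.
apply: contra; rewrite subr_eq0 => /eqP x_qi; apply/eqP.
by rewrite -[LHS](mulfK (expf_neq0 i q_neq0)) -x_qi mul1r.
Qed.

Section RealParameters.
Hypotheses (q_gt0 : 0 < q) (q_lt1 : q < 1) (t_gt0 : 0 < t).
Variable n : nat.
Hypothesis t_gen : forall i, (i <= 2 * n)%N -> t ^+ 2 != q ^- i.
Hypothesis qa_gen : forall i, (q * a) ^+ 2 != q ^- i.

Lemma one_sub_t2_qpow_neq0 i : (i <= 2 * n)%N -> 1 - t ^+ 2 * q ^+ i != 0.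
Proof. by move/t_gen/one_sub_mul_qpow_neq0. Qed.

Lemma one_sub_qa_qpow_neq0 k : (1 - q * a * q ^+ k != 0) && (1 - - (q * a) * q ^+ k != 0).
Proof.
have := one_sub_mul_qpow_neq0 (qa_gen (2 * k)).
have -> : 1 - (q * a) ^+ 2 * q ^+ (2 * k) = (1 - q * a * q ^+ k) * (1 - - (q * a) * q ^+ k).
  by rewrite mulnC exprM; ring.
by rewrite mulf_eq0 negb_or.
Qed.

Lemma one_sub_qpowS_neq0 m : 1 - q * q ^+ m != 0.
Proof. by rewrite -exprS subr_eq0 eq_sym lt_eqF // exprn_ilt1 ?ltW. Qed.

Lemma coefL_denoms_neq0 k : (k < (2 * n).+1)%N ->
  [&& 1 - q * a * q ^+ k != 0, 1 - - (q * a) * q ^+ k != 0,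
      1 - t ^+ 2 * q ^+ k != 0 & 1 - q * q ^+ k != 0].
Proof.
move=> lt_k; have /andP[qa_neq0 qa'_neq0] := one_sub_qa_qpow_neq0 k.
by rewrite qa_neq0 qa'_neq0 one_sub_t2_qpow_neq0 ?one_sub_qpowS_neq0.
Qed.

Lemma coefR_denoms_neq0 j : (j < n)%N ->
  [&& 1 - q ^+ 2 * a ^+ 2 * (q ^+ 2) ^+ j != 0, 1 - t ^+ 2 * q ^+ 2 * (q ^+ 2) ^+ j != 0,
      1 - t ^+ 2 * q * (q ^+ 2) ^+ j != 0 & 1 - q ^+ 2 * (q ^+ 2) ^+ j != 0].
Proof.
move=> lt_jn; rewrite -!exprM; apply/and4P; split.
- by rewrite -exprMn one_sub_mul_qpow_neq0.
- by rewrite -mulrA -exprD one_sub_t2_qpow_neq0 //; lia.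
- by rewrite -mulrA -exprS one_sub_t2_qpow_neq0 //; lia.
by rewrite -exprD addnC addn2 exprS one_sub_qpowS_neq0.
Qed.

Lemma opB_node_neq0 m : (m <= 2 * n)%N -> opB (node m) != 0.
Proof.
move=> le_m; have q_m_gt0 : 0 < q ^+ m by rewrite exprn_gt0.
rewrite /opB /node !mulf_neq0 //.
- rewrite (_ : a ^+ 2 * q ^+ 2 * (t * q ^+ m) ^+ 2 / t ^+ 2 = (q * a) ^+ 2 * q ^+ (2 * m)).
    exact: one_sub_mul_qpow_neq0.
  by rewrite mulnC exprM; field_nz.
- rewrite (_ : 1 - t ^+ 2 * (t * q ^+ m) ^+ 2 = (1 - t ^+ 2 * q ^+ m) * (1 + t ^+ 2 * q ^+ m));
    last by ring.
  by rewrite mulf_neq0 ?one_sub_t2_qpow_neq0 // lt0r_neq0 // addr_gt0 ?mulr_gt0 ?exprn_gt0.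
by rewrite lt0r_neq0 // addr_gt0 // divr_gt0 // exprn_gt0 // mulr_gt0.
Qed.

Lemma qlattice_node_increasing m l : (m < l)%N -> qlattice (node m) < qlattice (node l).
Proof.
move=> lt_ml; have lt_q : q ^+ l < q ^+ m by rewrite ltr_iXn2l.
rewrite /qlattice /node ltrD // ?ltrN2 ?ltr_pM2l //.
by rewrite ltf_pV2 ?posrE ?mulr_gt0 ?exprn_gt0 // ltr_pM2l.
Qed.

Lemma qlattice_node_uniq K : uniq [seq qlattice (node m) | m <- iota 0 K].
Proof.
rewrite map_inj_uniq ?iota_uniq // => m l eq_ml.
by case: (ltngtP m l) => // /qlattice_node_increasing; rewrite eq_ml ltxx.
Qed.

Lemma sumL_sumR_at_nodes m : (m <= (2 * n).+1)%N ->
  sumL (2 * n).+1 (node m) = t / (1 - t ^+ 2) * sumR n (node m).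
Proof.
have eigRL : eigR n = eigL (2 * n).+1 by rewrite /eigR /eigL (exprS q (2 * n)) exprM; field_nz.
apply: (eigen_nodes_unique (sumL (2 * n).+1) (fun z => t / (1 - t ^+ 2) * sumR n z)
  (eigL (2 * n).+1) (2 * n)).
- by move=> k _; rewrite qdiff_sumL ?node_neq0 // => i; apply: coefL_denoms_neq0.
- move=> k _; rewrite qdiffZ qdiff_sumR ?node_neq0 //; last exact: coefR_denoms_neq0.
  by rewrite eigRL; ring.
- exact: opB_node_neq0.
rewrite sumL_node0 sumR_node0.
have t2_neq1 : 1 - t ^+ 2 != 0 by have := @one_sub_t2_qpow_neq0 0 isT; rewrite expr0 mulr1.
by field_nz.
Qed.

Lemma sumL_eq_sumR z : z != 0 -> sumL (2 * n).+1 z = t / (1 - t ^+ 2) * sumR n z.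
Proof.
move=> z_neq0; rewrite -horner_polyL // -horner_polyR //; congr (_.[_]); apply/eqP.
rewrite -subr_eq0; apply/eqP.
apply: (roots_geq_poly_eq0 (rs := [seq qlattice (node m) | m <- iota 0 (2 * n).+2])).
- apply/allP => x /mapP[m]; rewrite mem_iota add0n => lt_m ->.
  by rewrite /root hornerD hornerN horner_polyL ?horner_polyR ?node_neq0 ?sumL_sumR_at_nodes ?subrr.
- exact: qlattice_node_uniq.
rewrite size_map size_iota; apply: leq_trans (size_polyD _ _) _.
by rewrite geq_max size_polyN size_polyR (leq_trans (size_polyL _)).
Qed.

End RealParameters.

End QRacahOperator.

Theorem mainTheorem8 (C : numClosedFieldType) (q : C) (M n : nat) (alpha z : C) :
  0 < q -> q < 1 -> (0 < M)%N -> (n <= M./2)%N ->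
  (forall j : nat, q * alpha != q ^- j) ->
  (forall j : nat, - (q * alpha) != q ^- j) ->
  (forall j : nat, q ^+ 2 * alpha ^+ 2 != q ^- j) ->
  z != 0 ->
  phi43 (q ^- (2 * n).+1) (alpha ^+ 2 * q ^+ (2 * n).+2)
        (sqrtC q ^- M.+1 / z) (- (sqrtC q ^- M.+1 * z))
        (q * alpha) (- (q * alpha)) (q ^- M.+1) q q (2 * n).+1
  = (sqrtC q ^- M.+1 / z - sqrtC q ^- M.+1 * z) / (1 - q ^- M.+1)
    * phi43 (q ^- (2 * n)) (alpha ^+ 2 * q ^+ (2 * n).+3)
            (q ^- M.+1 / z ^+ 2) (q ^- M.+1 * z ^+ 2)
            (q ^+ 2 * alpha ^+ 2) (q ^- M.-1) (q ^- M) (q ^+ 2) (q ^+ 2) n.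
Proof.
(* The conditions on [q alpha] and [- q alpha] are implied by the one on [q^2 alpha^2]. *)
move=> q_gt0 q_lt1 M_gt0 le_n_M _ _ qa_gen z_neq0.
have q_neq0 : q != 0 := lt0r_neq0 q_gt0.
set t := sqrtC q ^- M.+1.
have t_gt0 : 0 < t by rewrite invr_gt0 exprn_gt0 // sqrtC_gt0.
have t2E : q ^- M.+1 = t ^+ 2 by rewrite exprVn exprAC sqrtCK.
have t_gen i : (i <= 2 * n)%N -> t ^+ 2 != q ^- i.
  move=> le_i; rewrite -t2E (inj_eq invr_inj) lt_eqF // ltr_iXn2l //.
  by move: le_n_M; rewrite -divn2; lia.
have -> : q ^- M.-1 = t ^+ 2 * q ^+ 2 by rewrite -t2E -(prednK M_gt0) !exprS; field_nz.
have -> : q ^- M = t ^+ 2 * q by rewrite -t2E exprS; field_nz.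
rewrite t2E [RHS]mulrAC phi43_sumR phi43_sumL.
rewrite sumL_eq_sumR ?(lt0r_neq0 t_gt0) //; first by rewrite mulrAC.
by move=> j; rewrite exprMn.
Qed.
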